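(* Let $N\geq 2$ and let $\Sigma$ be the one-sided shift on $\{0,1,\dots,N-1\}^{\mathbb{N}_0}$, ordered lexicographically. Let $\pi\in\mathcal{S}_L$ be a spiralling pattern with $D$ segments $p_1<\dots<p_D$ of lengths $h_1,\dots,h_D$, where $h_1\geq 2$. Then $\pi$ is forbidden for $\Sigma$ if (a) $D\geq N$ and $h_D\geq 2$, or (b) $D\geq N+1$ and $h_D=1$; otherwise $\pi$ is allowed for $\Sigma$.
   Context: $\{0,1,\dots,N-1\}^{\mathbb{N}_0}$ is the set of sequences $\omega=(\omega_0,\omega_1,\dots)$ with $\omega_n\in\{0,\dots,N-1\}$, and $\Sigma(\omega_0,\omega_1,\dots)=(\omega_1,\omega_2,\dots)$; $\omega<\omega'$ lexicographically iff at the first index $n$ where they differ, $\omega_n<\omega'_n$. $\mathcal{S}_L$ is the set of permutations $\pi=[\pi_0,\dots,\pi_{L-1}]$ of $\{0,\dots,L-1\}$. $\omega$ defines $\pi$ if $\Sigma^{\pi_0}(\omega)<\dots<\Sigma^{\pi_{L-1}}(\omega)$; $\pi$ is allowed if some $\omega$ defines it and forbidden otherwise. A partition of $0,1,\dots,L-1$ into $D\geq 2$ segments is a splitting $p_1<p_2<\dots<p_D$ where $p_d$ is the increasing run $e_d,e_d+1,\dots,e_d+h_d-1$ with $h_d\geq1$, $h_1+\dots+h_D=L$, $e_1=0$ and $e_{d+1}=e_d+h_d$. The reversed segment is $\overleftarrow{p_d}=e_d+h_d-1,\dots,e_d+1,e_d$. A spiralling pattern of length $L$ is a pattern of the form $\pi=[\dots,\overleftarrow{p_5},\overleftarrow{p_3},\overleftarrow{p_1},p_2,p_4,\dots]$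 (all odd-indexed segments reversed, placed to the left in decreasing order of index, followed by all even-indexed segments in increasing order of index), or its mirrored pattern $[\dots,\overleftarrow{p_4},\overleftarrow{p_2},p_1,p_3,\dots]$ (even-indexed segments reversed on the left in decreasing order of index, then odd-indexed segments in increasing order of index). *)

From mathcomp Require Import all_boot.
Set Implicit Arguments. Unset Strict Implicit. Unset Printing Implicit Defensive.

Definition lex_lt (a b : nat -> nat) : Prop :=
  exists n, (forall k, k < n -> a k = b k) /\ a n < b n.

Definition shiftk (k : nat) (w : nat -> nat) : nat -> nat := fun n => w (n + k).

Definition is_word (N : nat) (w : nat -> nat) : Prop := forall n, w n < N.

Definition defines (w : nat -> nat) (pi : seq nat) : Prop :=
  forall i, i.+1 < size pi ->
    lex_lt (shiftk (nth 0 pi i) w) (shiftk (nth 0 pi i.+1) w).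

Definition allowed (N : nat) (pi : seq nat) : Prop :=
  exists w, is_word N w /\ defines w pi.

Definition forbidden (N : nat) (pi : seq nat) : Prop := ~ allowed N pi.

(* Segments of a partition of 0..L-1 given by lengths h = [h_1; ...; h_D]
   (0-indexed: seg h d = p_{d+1} = e_{d+1}, ..., e_{d+1}+h_{d+1}-1). *)
Definition seg (h : seq nat) (d : nat) : seq nat :=
  iota (sumn (take d h)) (nth 0 h d).

(* [..., rev p5, rev p3, rev p1, p2, p4, ...]  (1-indexed odd = 0-indexed even) *)
Definition spiral (h : seq nat) : seq nat :=
  flatten [seq rev (seg h d) | d <- rev [seq d <- iota 0 (size h) | ~~ odd d]] ++
  flatten [seq seg h d | d <- [seq d <- iota 0 (size h) | odd d]].

(* mirrored: [..., rev p4, rev p2, p1, p3, ...] *)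
Definition spiral_mirror (h : seq nat) : seq nat :=
  flatten [seq rev (seg h d) | d <- rev [seq d <- iota 0 (size h) | odd d]] ++
  flatten [seq seg h d | d <- [seq d <- iota 0 (size h) | ~~ odd d]].

Definition spiralling (h : seq nat) (pi : seq nat) : Prop :=
  2 <= size h /\ all (fun x => 0 < x) h /\ (pi = spiral h \/ pi = spiral_mirror h).

From mathcomp Require Import all_boot zify.
Set Implicit Arguments. Unset Strict Implicit. Unset Printing Implicit Defensive.

(* Colour each position by the parity of its segment: a spiralling pattern lists
   the positions of one colour from right to left, then those of the other
   colour from left to right.  A word realises such a pattern iff its shifts are
   ordered by the resulting key.  Comparing first letters, the letters along the
   pattern are nondecreasing, and they must increase strictly across each colour
   change ("turn"), for otherwise the comparison passes to the successors, which
   the turn puts in the opposite order.  Moreover, when the last two positions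
   have the same colour, all turns are passed before position [L-2] is reached,
   and its letter is not the top one since its shift is smaller than the next
   one.  As [h_1 >= 2], no turn occurs at position 0, so at least
   [(D - 1) + 1 + [h_D >= 2]] letters are needed.  Conversely the word that
   counts the turns passed along the pattern and is then constantly the top
   letter realises the pattern with that many letters. *)

Lemma iota0S n : iota 0 n.+1 = iota 0 n ++ [:: n].
Proof. by rewrite -addn1 iotaD. Qed.

Lemma count_iota_mono (a : pred nat) m n :
  m <= n -> count a (iota 0 m) <= count a (iota 0 n).
Proof. by move=> mn; rewrite -(subnKC mn) iotaD count_cat leq_addr. Qed.

Lemma count_iota_lt (a : pred nat) m n c :
  m <= c -> c < n -> a c -> count a (iota 0 m) < count a (iota 0 n).
Proof.
move=> mc cn ac; rewrite -(subnKC (leq_trans mc (ltnW cn))) iotaD count_cat.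
rewrite -[X in X < _]addn0 ltn_add2l -has_count; apply/hasP; exists c => //.
by rewrite mem_iota; lia.
Qed.

Lemma unit_steps_count (g : nat -> nat) n :
  (forall c, c < n -> g c.+1 = g c \/ g c.+1 = (g c).+1) ->
  g n = g 0 + count (fun c => g c.+1 != g c) (iota 0 n).
Proof.
elim: n => [|n IHn] steps; first by rewrite addn0.
rewrite iota0S count_cat [count _ [:: _]]/= addn0 addnA -IHn => [|c cn].
  case: (steps n (ltnSn n)) => ->; rewrite ?eqxx ?addn0 //.
  by rewrite (_ : _ != _) ?addn1 //; apply/eqP; lia.
exact: steps (ltnW cn).
Qed.

Lemma eq_odd_unit_step m n : n = m \/ n = m.+1 -> (odd m == odd n) = (m == n).
Proof. by case=> ->; rewrite ?eqxx //= eqn_leq ltnn andbF; case: odd. Qed.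

(** * Lexicographic comparison of shifts *)

Section Lexicographic.

Implicit Types (a b w : nat -> nat) (i j k m n : nat).

Lemma lex_lt_head a b : lex_lt a b -> a 0 <= b 0.
Proof. by case=> [[|n]] [eq_ab lt_ab]; [apply: ltnW | rewrite eq_ab]. Qed.

Lemma lex_lt_asym a b : lex_lt a b -> ~ lex_lt b a.
Proof.
case=> n [eq_ab lt_ab] [m [eq_ba lt_ba]].
case: (ltngtP n m) => [nm|mn|enm]; last by subst m; lia.
- by move: lt_ab; rewrite eq_ba // ltnn.
- by move: lt_ba; rewrite eq_ab // ltnn.
Qed.

Lemma lex_lt_trans b a c : lex_lt a b -> lex_lt b c -> lex_lt a c.
Proof.
case=> n [eq_ab lt_ab] [m [eq_bc lt_bc]].
case: (ltngtP n m) => [nm|mn|enm].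
- exists n; split=> [k kn|]; first by rewrite eq_ab // eq_bc // (ltn_trans kn nm).
  by rewrite -(eq_bc _ nm).
- exists m; split=> [k km|]; first by rewrite eq_ab ?eq_bc // (ltn_trans km mn).
  by rewrite (eq_ab _ mn).
- subst m; exists n; split=> [k kn|]; first by rewrite eq_ab ?eq_bc.
  exact: ltn_trans lt_bc.
Qed.

Lemma shiftkS w i k : w i = w k ->
  lex_lt (shiftk i.+1 w) (shiftk k.+1 w) <-> lex_lt (shiftk i w) (shiftk k w).
Proof.
rewrite /shiftk => wik; split=> [[n [eq_n lt_n]] | [[|n] [eq_n lt_n]]].
- exists n.+1; split=> [[|j] jn|]; rewrite ?add0n // !addSnnS //; exact: eq_n.
- by move: lt_n; rewrite !add0n wik ltnn.
- exists n; split=> [j jn|]; rewrite -!addSnnS //; exact: eq_n.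
Qed.

Lemma defines_lex_lt w s : defines w s -> forall j k, j < k -> k < size s ->
  lex_lt (shiftk (nth 0 s j) w) (shiftk (nth 0 s k) w).
Proof.
move=> def_s j; elim=> // k IHk; rewrite ltnS leq_eqVlt => /orP[/eqP-> | jk] ks.
  exact: def_s.
exact: lex_lt_trans (IHk jk (ltnW ks)) (def_s k ks).
Qed.

Variable N : nat.

Lemma shift_lt_next_not_top w i :
  is_word N w -> lex_lt (shiftk i w) (shiftk i.+1 w) -> w i < N.-1.
Proof.
move=> wN [n [eq_n lt_n]]; suff /eqP : w i <> N.-1 by have := wN i; lia.
move=> top.
have top_run j : j <= n -> w (j + i) = N.-1.
  elim: j => [|j IHj] jn; first by rewrite add0n.
  by move: (eq_n j jn); rewrite /shiftk addSnnS => <-; apply: IHj; apply: ltnW.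
by move: lt_n (wN (n + i.+1)); rewrite /shiftk top_run //; lia.
Qed.

Lemma lex_lt_top_tail w j m L :
  is_word N w -> (forall n, L <= n -> w n = N.-1) -> j <= m -> w m < N.-1 ->
  lex_lt (shiftk j w) (shiftk L w).
Proof.
move=> wN top_tail jm wm.
have exP : exists n, w (n + j) < N.-1 by exists (m - j); rewrite subnK.
case: (ex_minnP exP) => n lt_n min_n.
exists n; split=> [k kn|]; rewrite /shiftk (top_tail (_ + L)) ?leq_addl //.
have := wN (k + j); case: (ltnP (w (k + j)) N.-1) => [/min_n|]; lia.
Qed.

End Lexicographic.

(** * Patterns read off a two-colouring *)

Section SpiralOfColouring.

Variables (f : nat -> bool) (L : nat).

Definition spiral_key i := if f i then L + i else L.-1 - i.

Definition spiral_of : seq nat :=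
  rev [seq i <- iota 0 L | ~~ f i] ++ [seq i <- iota 0 L | f i].

Definition key_ordered (w : nat -> nat) := forall i k, i < L -> k < L ->
  spiral_key i < spiral_key k -> lex_lt (shiftk i w) (shiftk k w).

Definition turn c := (c.+1 < L) && (f c != f c.+1).

Definition alphabet_size := count turn (iota 0 L) + 1 + (f L.-2 == f L.-1).

Lemma spiral_key_inj i k : i < L -> k < L -> spiral_key i = spiral_key k -> i = k.
Proof. by rewrite /spiral_key; case: (f i); case: (f k); lia. Qed.

Lemma mem_spiral_of i : (i \in spiral_of) = (i < L).
Proof. by rewrite mem_cat mem_rev !mem_filter mem_iota; case: (f i) => /=; lia. Qed.

Lemma spiral_key_lt_true i k : f k -> i < k -> spiral_key i < spiral_key k.
Proof. by rewrite /spiral_key => ->; case: (f i); lia. Qed.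

Lemma spiral_key_lt_false i k : ~~ f i -> i < L -> k < i -> spiral_key i < spiral_key k.
Proof. by rewrite /spiral_key => /negbTE->; case: (f k); lia. Qed.

Lemma sorted_spiral_of : sorted (fun i k => spiral_key i < spiral_key k) spiral_of.
Proof.
have iota_lt (a : pred nat) : pairwise ltn [seq i <- iota 0 L | a i].
  by apply: pairwise_filter; rewrite -sorted_pairwise ?iota_ltn_sorted //; apply: ltn_trans.
have below_L (a : pred nat) : all [pred i | a i & i < L] [seq i <- iota 0 L | a i].
  by apply/allP=> i; rewrite mem_filter mem_iota /= => /andP[-> ?]; lia.
rewrite sorted_pairwise => [|? ? ?]; last exact: ltn_trans.
rewrite pairwise_cat; apply/and3P; split.
- apply/allrelP => i k; rewrite mem_rev !mem_filter !mem_iota /spiral_key.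
  by case/andP=> /negbTE -> ?; case/andP=> -> ?; lia.
- rewrite -sorted_pairwise => [|? ? ?]; last exact: ltn_trans.
  rewrite rev_sorted sorted_pairwise => [|x y z /= yx zy]; last exact: ltn_trans zy yx.
  apply: sub_in_pairwise (below_L _) (iota_lt _).
  by move=> i k _ /andP[fk kL]; apply: spiral_key_lt_false.
- apply: sub_in_pairwise (below_L _) (iota_lt _).
  by move=> i k _ /andP[fk _]; apply: spiral_key_lt_true.
Qed.

Lemma defines_spiral_ofP w : defines w spiral_of <-> key_ordered w.
Proof.
have key_trans : transitive (fun i k => spiral_key i < spiral_key k).
  by move=> ? ? ?; apply: ltn_trans.
split=> [def_w i k iL kL ik | ord_w i iL].
- have [iP kP] : i \in spiral_of /\ k \in spiral_of by rewrite !mem_spiral_of.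
  rewrite -(nth_index 0 iP) -(nth_index 0 kP).
  have [ji jk] : index i spiral_of < size spiral_of /\ index k spiral_of < size spiral_of.
    by rewrite !index_mem.
  case: (ltngtP (index i spiral_of) (index k spiral_of)) => [lt_ik|lt_ki|eq_ik].
  + exact: defines_lex_lt.
  + have := sorted_ltn_nth key_trans 0 sorted_spiral_of _ _ jk ji lt_ki.
    by rewrite !nth_index //; lia.
  + by move: ik; rewrite -(nth_index 0 iP) -(nth_index 0 kP) eq_ik ltnn.
- have nth_lt j : j < size spiral_of -> nth 0 spiral_of j < L.
    by move=> js; rewrite -mem_spiral_of mem_nth.
  by apply: ord_w; rewrite ?nth_lt ?(sortedP 0 sorted_spiral_of) // ltnW.
Qed.

Section Necessity.

Variables (N : nat) (w : nat -> nat).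
Hypotheses (wN : is_word N w) (w_ord : key_ordered w) (f01 : f 0 = f 1).

Lemma key_ordered_mono i k :
  i < L -> k < L -> spiral_key i < spiral_key k -> w i <= w k.
Proof. by move=> iL kL /(w_ord iL kL)/lex_lt_head; rewrite /shiftk !add0n. Qed.

Lemma key_ordered_turn i k : i.+1 < L -> k.+1 < L ->
  spiral_key i < spiral_key k -> spiral_key k.+1 < spiral_key i.+1 -> w i < w k.
Proof.
move=> iL kL ik ki; rewrite ltn_neqAle (key_ordered_mono (ltnW iL) (ltnW kL) ik) andbT.
apply/eqP => /shiftkS wik; have := wik.2 (w_ord (ltnW iL) (ltnW kL) ik).
by move/lex_lt_asym; apply; apply: w_ord.
Qed.

(* [t] and [u] are the letters of the prefix [0..n] placed rightmost and
   leftmost in the pattern; each turn inside the prefix forces a strict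
   increase of the letter on the way from [u] to [t]. *)
Lemma prefix_spread n : n < L -> exists t u, [/\ t <= n, u <= n,
  forall k, k <= n -> spiral_key u <= spiral_key k <= spiral_key t &
  w u + count turn (iota 0 n.+1) <= w t].
Proof.
elim: n => [L0|n IHn nL].
  exists 0, 0; split=> // [k|]; first by rewrite leqn0 => /eqP->; rewrite leqnn.
  by rewrite /= /turn f01 eqxx andbF /= !addn0.
have [t [u [tn un key_tu w_tu]]] := IHn (ltnW nL).
rewrite iota0S count_cat [count _ [:: _]]/= addn0.
have key_t : spiral_key u <= spiral_key t by have /andP[] := key_tu u un.
case fn: (f n.+1).
- have t_n : spiral_key t < spiral_key n.+1 by rewrite spiral_key_lt_true // ltnS.
  exists n.+1, u; split=> //; first exact: leqW.
    move=> k; rewrite leq_eqVlt ltnS => /orP[/eqP-> | kn].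
      by rewrite leqnn andbT (ltnW (leq_ltn_trans key_t t_n)).
    by case/andP: (key_tu k kn) => -> /leq_ltn_trans/(_ t_n)/ltnW.
  have := key_ordered_mono (leq_ltn_trans tn (ltnW nL)) nL t_n.
  case: (turn n.+1) / andP => [[n2L /negPf fn2]|_]; last by rewrite addn0; lia.
  suff : w t < w n.+1 by lia.
  rewrite fn in fn2; apply: key_ordered_turn => //; first lia.
  by rewrite spiral_key_lt_false ?fn2 //; lia.
- have n_u : spiral_key n.+1 < spiral_key u by rewrite spiral_key_lt_false ?fn // ltnS.
  exists t, n.+1; split=> //; first exact: leqW.
    move=> k; rewrite leq_eqVlt ltnS => /orP[/eqP-> | kn].
      by rewrite leqnn (ltnW (leq_trans n_u key_t)).
    by case/andP: (key_tu k kn) => /(leq_trans n_u)/ltnW ->.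
  have := key_ordered_mono nL (leq_ltn_trans un (ltnW nL)) n_u.
  case: (turn n.+1) / andP => [[n2L fn2]|_]; last by rewrite addn0; lia.
  suff : w n.+1 < w u by lia.
  rewrite fn eq_sym eqbF_neg negbK in fn2; apply: key_ordered_turn => //; first lia.
  by rewrite spiral_key_lt_true // ltnS.
Qed.

Lemma alphabet_size_le : 2 <= L -> f L.-1 -> alphabet_size <= N.
Proof.
move=> L2 fL; rewrite /alphabet_size.
have [L1 LL] : L.-1.+1 = L /\ L.-2.+1 = L.-1 by lia.
have [L1L L2L] : L.-1 < L /\ L.-2 < L by lia.
case fL2: (f L.-2); rewrite fL /=.
- have [t [u [tn un key_tu w_tu]]] := prefix_spread L2L.
  have t_last : t = L.-2.
    apply: spiral_key_inj; [lia|lia|]; apply/eqP; rewrite eqn_leq.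
    case/andP: (key_tu L.-2 (leqnn _)) => _ ->; rewrite andbT.
    by move: tn; rewrite leq_eqVlt => /orP[/eqP->|/(spiral_key_lt_true fL2)/ltnW].
  have : w L.-2 < N.-1.
    apply: (shift_lt_next_not_top wN); rewrite LL.
    by apply: w_ord; rewrite ?LL ?spiral_key_lt_true; lia.
  have no_last_turn : turn L.-1 = false by rewrite /turn L1 ltnn.
  have -> : iota 0 L = iota 0 L.-2.+1 ++ [:: L.-1] by rewrite LL -iota0S L1.
  move: w_tu; rewrite t_last count_cat [count _ [:: _]]/= no_last_turn; lia.
- have [t [u [_ _ _]]] := prefix_spread L1L.
  by rewrite L1 addn0; have := wN t; lia.
Qed.

End Necessity.

Definition falls n := count (fun c => turn c && f c) (iota 0 n.+1).
Definition rises n := count (fun c => turn c && ~~ f c) (iota 0 n.+1).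

(* Along the pattern, [level] starts at 0 and goes up by one at each turn. *)
Definition level i := if f i then rises L.-1 + falls i else rises L.-1 - rises i.

Definition spiral_word N n := if n < L then level n else N.-1.

Lemma falls_rises_total : 0 < L -> falls L.-1 + rises L.-1 = count turn (iota 0 L).
Proof.
move=> L0; rewrite /falls /rises prednK // -count_predUI.
rewrite (@eq_count _ (predI _ _) pred0) => [|c /=]; last by case: (f c); rewrite ?andbF.
by rewrite count_pred0 addn0; apply: eq_count => c /=; case: (turn c); case: (f c).
Qed.

Section Sufficiency.

Variable N : nat.
Hypotheses (L2 : 2 <= L) (fL : f L.-1) (N_large : alphabet_size <= N).

Lemma level_mono i k : i < L -> k < L ->
  spiral_key i < spiral_key k -> level i <= level k.
Proof.
move=> iL kL; rewrite /spiral_key /level.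
have [ri rk] : rises i <= rises L.-1 /\ rises k <= rises L.-1.
  by split; apply: count_iota_mono; lia.
case fi: (f i); case fk: (f k) => ik; try lia.
- by rewrite leq_add2l; apply: count_iota_mono; lia.
- have : rises k <= rises i by apply: count_iota_mono; lia.
  lia.
Qed.

Lemma level_succ i k : i.+1 < L -> k.+1 < L -> spiral_key i < spiral_key k ->
  level i = level k -> spiral_key i.+1 < spiral_key k.+1.
Proof.
move=> iL kL; rewrite /spiral_key /level.
have [ri rk] : rises i <= rises L.-1 /\ rises k <= rises L.-1.
  by split; apply: count_iota_mono; lia.
have fall_at c : c.+1 < L -> f c -> ~~ f c.+1 -> turn c && f c.
  by rewrite /turn => -> -> /negbTE ->.
have rise_at c : c.+1 < L -> ~~ f c -> f c.+1 -> turn c && ~~ f c.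
  by rewrite /turn => -> /negbTE -> ->.
case fi: (f i); case fk: (f k) => ik E; try lia.
- case fk1: (f k.+1); first by case: (f i.+1) => /=; lia.
  have : falls i < falls k.
    by rewrite /falls; apply: (count_iota_lt _ _ (fall_at k kL _ _)); rewrite ?fk ?fk1 //; lia.
  lia.
- case fk1: (f k.+1); last first.
    have : 0 < falls k.
      by rewrite /falls; apply: (count_iota_lt (m := 0) _ _ (fall_at k kL _ _)); rewrite ?fk ?fk1.
    lia.
  case fi1: (f i.+1) => /=; last lia.
  have : 0 < rises i.
    by rewrite /rises; apply: (count_iota_lt (m := 0) _ _ (rise_at i iL _ _)); rewrite ?fi ?fi1.
  lia.
- case fi1: (f i.+1); last by case: (f k.+1) => /=; lia.
  have : rises k < rises i.
    by rewrite /rises; apply: (count_iota_lt _ _ (rise_at i iL _ _)); rewrite ?fi ?fi1 //; lia.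
  lia.
Qed.

Lemma level_le_turns i : i < L -> level i <= count turn (iota 0 L).
Proof.
move=> iL; rewrite -falls_rises_total ?(leq_ltn_trans _ iL) // /level.
have : falls i <= falls L.-1 by apply: count_iota_mono; lia.
by case: (f i); lia.
Qed.

Lemma level_penult : level L.-2 < N.-1.
Proof.
have [L1 LL] : L.-1.+1 = L /\ L.-2.+1 = L.-1 by lia.
move: N_large; rewrite /alphabet_size /level -falls_rises_total ?(ltn_trans _ L2) // fL.
case fL2: (f L.-2) => /=.
  have : falls L.-2 <= falls L.-1 by apply: count_iota_mono; lia.
  lia.
have : 0 < rises L.-2.
  rewrite /rises; apply: (count_iota_lt (m := 0) (c := L.-2)) => //.
  by rewrite /turn LL L1 leqnn fL2 fL.
have : rises L.-2 <= rises L.-1 by apply: count_iota_mono; lia.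
lia.
Qed.

Lemma is_word_spiral_word : is_word N (spiral_word N).
Proof.
move=> n; move: N_large; rewrite /spiral_word /alphabet_size; case: ifP => nL; last lia.
by move: (level_le_turns nL); lia.
Qed.

(* Induction on [L - i]: equal letters pass the comparison on to the
   successors, whose keys are ordered the same way by [level_succ]; the only
   successor outside [0..L-1] is [L], from which on the word is constantly
   the top letter. *)
Lemma key_ordered_spiral_word : key_ordered (spiral_word N).
Proof.
have word_lt i : i < L -> spiral_word N i = level i by rewrite /spiral_word => ->.
suff ord_from m i k : i < L -> k < L -> L - i <= m -> spiral_key i < spiral_key k ->
    lex_lt (shiftk i (spiral_word N)) (shiftk k (spiral_word N)).
  by move=> i k iL kL; apply: (ord_from L); rewrite ?leq_subr.
elim: m i k => [|m IHm] i k iL kL; first lia.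
move=> Lim ik; case: (ltngtP (level i) (level k)) => [lt_ik | gt_ik | eq_ik].
- by exists 0; split=> [//|]; rewrite /shiftk !add0n !word_lt.
- by have := level_mono iL kL ik; lia.
have iL1 : i.+1 < L.
  rewrite ltn_neqAle iL andbT; apply/eqP => iE; move: ik.
  by rewrite /spiral_key (_ : i = L.-1) ?fL; [case: (f k); lia | lia].
apply/shiftkS; first by rewrite !word_lt.
case: (ltnP k.+1 L) => [kL1 | Lk]; first by apply: IHm; rewrite ?level_succ //; lia.
rewrite (_ : k.+1 = L); last lia.
have [m0 /andP[im0 m0L] lt_m0] : exists2 m0, i.+1 <= m0 < L & level m0 < N.-1.
  case: (leqP i.+1 L.-2) => iL2; first by exists L.-2; rewrite ?level_penult; lia.
  by exists k; rewrite -?eq_ik (_ : i = L.-2) ?level_penult; lia.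
apply: (lex_lt_top_tail is_word_spiral_word _ im0); last by rewrite word_lt.
by move=> n Ln; rewrite /spiral_word ltnNge Ln.
Qed.

End Sufficiency.

End SpiralOfColouring.

Section Complement.

Variables (f g : nat -> bool) (L N : nat).
Hypothesis g_compl : forall i, g i = ~~ f i.

Lemma alphabet_size_compl : alphabet_size g L = alphabet_size f L.
Proof.
rewrite /alphabet_size !g_compl (eq_count (a2 := turn f L)) => [|c].
  by case: (f L.-2); case: (f L.-1).
by rewrite /turn !g_compl; case: (f c); case: (f c.+1).
Qed.

(* Reflecting the alphabet reverses the lexicographic order, and so does
   swapping the colours in the keys. *)
Lemma allowed_spiral_of_compl :
  0 < N -> allowed N (spiral_of f L) -> allowed N (spiral_of g L).
Proof.
move=> N0 [w [wN /defines_spiral_ofP w_ord]].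
exists (fun n => N.-1 - w n); split=> [n|]; first lia.
apply/defines_spiral_ofP => i k iL kL ik.
have [n [eq_n lt_n]] : lex_lt (shiftk k w) (shiftk i w).
  apply: w_ord => //; move: ik.
  by rewrite /spiral_key !g_compl; case: (f i); case: (f k) => /=; lia.
exists n; split=> [j jn|]; first by move: (eq_n j jn); rewrite /shiftk => ->.
by move: lt_n (wN (n + i)); rewrite /shiftk; lia.
Qed.

End Complement.

Theorem allowed_spiral_ofP f L N : 2 <= L -> 2 <= N -> f 0 = f 1 ->
  allowed N (spiral_of f L) <-> alphabet_size f L <= N.
Proof.
move=> L2 N2 f01; wlog fL : f f01 / f L.-1 => [last_true|].
  case fL: (f L.-1); first exact: last_true.
  have f_negK i : f i = ~~ ~~ f i by rewrite negbK.
  rewrite -(alphabet_size_compl L (g := fun i => ~~ f i)) // -last_true /= ?f01 ?fL //.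
  by split; apply: allowed_spiral_of_compl; rewrite // ltnW.
split=> [[w [wN /defines_spiral_ofP w_ord]] | N_large].
  exact: alphabet_size_le wN w_ord f01 L2 fL.
exists (spiral_word f L N); split; first exact: is_word_spiral_word.
exact/defines_spiral_ofP/key_ordered_spiral_word.
Qed.

(** * Segments *)

Lemma count_turn_odd_steps (g : nat -> nat) L : 0 < L ->
  (forall c, c.+1 < L -> g c.+1 = g c \/ g c.+1 = (g c).+1) ->
  count (turn (fun i => odd (g i)) L) (iota 0 L) = g L.-1 - g 0.
Proof.
move=> L0 steps; have -> : iota 0 L = iota 0 L.-1 ++ [:: L.-1] by rewrite -iota0S prednK.
rewrite count_cat [count _ [:: _]]/=.
rewrite {2}/turn prednK // ltnn /= addn0.
rewrite [g L.-1](unit_steps_count (n := L.-1)) => [|c cL]; last by apply: steps; lia.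
rewrite addKn addn0; apply: eq_in_count => c; rewrite mem_iota /turn => /andP[_ cL].
rewrite (_ : c.+1 < L) /=; last lia.
by case: (steps c _) => [|->|->]; rewrite ?eqxx /= ?eqn_leq ?ltnn //; [lia | case: odd].
Qed.

Fixpoint block (h : seq nat) (i : nat) : nat :=
  if h is x :: h' then (if i < x then 0 else (block h' (i - x)).+1) else 0.

Lemma block_lt_size h i : i < sumn h -> block h i < size h.
Proof. by elim: h i => //= x h IHh i ih; case: (ltnP i x) => // xi; rewrite ltnS IHh //; lia. Qed.

Lemma block_rcons h x i : i < sumn h + x ->
  block (rcons h x) i = if i < sumn h then block h i else size h.
Proof.
elim: h i => [|y h IHh] i /=; first by rewrite add0n => ->.
move=> ihx; case: (ltnP i y) => iy; first by rewrite ltn_addr.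
rewrite IHh; last lia.
have -> : (i < y + sumn h) = (i - y < sumn h) by lia.
by case: ifP.
Qed.

Lemma block0 h : all (fun x => 0 < x) h -> block h 0 = 0.
Proof. by case: h => //= x h /andP[-> _]. Qed.

Lemma block_step h c : all (fun x => 0 < x) h -> c.+1 < sumn h ->
  block h c.+1 = block h c \/ block h c.+1 = (block h c).+1.
Proof.
elim: h c => [|x h IHh] c //= /andP[x0 h_pos] cS.
case: (ltngtP c.+1 x) => [c1x | xc1 | c1x].
- by left.
- rewrite subSn; last lia.
  by case: (IHh (c - x)) => // [|->|->]; [lia | left | right].
- rewrite c1x subnn; right; congr S.
  by case: h IHh h_pos cS => //= y h _ /andP[-> _].
Qed.

Lemma count_turn_block h : all (fun x => 0 < x) h -> h != [::] ->
  count (turn (fun i => odd (block h i)) (sumn h)) (iota 0 (sumn h)) = (size h).-1.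
Proof.
case/lastP: h => // h x; rewrite all_rcons => /andP[x0 h_pos] _.
rewrite count_turn_odd_steps ?sumn_rcons; last 2 first.
- by rewrite addn_gt0 x0 orbT.
- by move=> c cS; apply: block_step; rewrite ?all_rcons ?x0 ?sumn_rcons.
rewrite block0 ?all_rcons ?x0 // subn0 block_rcons ?size_rcons ?ifN //; lia.
Qed.

Lemma block_last_pair h : all (fun x => 0 < x) h -> 2 <= sumn h ->
  (block h (sumn h).-2 == block h (sumn h).-1) = (2 <= last 0 h).
Proof.
case/lastP: h => // h x; rewrite all_rcons sumn_rcons last_rcons => /andP[x0 _] S2.
rewrite !block_rcons; try lia.
case: (leqP 2 x) => x2; first by rewrite !ifN ?eqxx //; lia.
have -> : (sumn h + x).-1 = sumn h by lia.
rewrite ltnn ifT; last lia.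
by apply/negbTE; rewrite neq_ltn block_lt_size //; lia.
Qed.

Lemma seg_consS x h d : seg (x :: h) d.+1 = map (addn x) (seg h d).
Proof. by rewrite /seg /= -iotaDl. Qed.

Lemma flatten_seg_filter h (Q : pred nat) :
  flatten [seq seg h d | d <- [seq d <- iota 0 (size h) | Q d]] =
  [seq i <- iota 0 (sumn h) | Q (block h i)].
Proof.
elim: h Q => [|x h IHh] Q //=.
have shift_iota n m : iota m n = map (addn m) (iota 0 n) by rewrite -iotaDl addn0.
have flatten_shift (ds : seq nat) : flatten [seq seg (x :: h) d | d <- map S ds] =
    map (addn x) (flatten [seq seg h d | d <- ds]).
  by rewrite map_flatten -!map_comp; congr flatten; apply: eq_map => d /=; rewrite seg_consS.
have -> : iota 1 (size h) = map S (iota 0 (size h)).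
  by rewrite -[1]addn0 iotaDl; apply: eq_map => d; rewrite add1n.
rewrite iotaD add0n (shift_iota (sumn h) x) filter_cat !filter_map.
rewrite [filter _ (iota 0 x)](eq_in_filter (a2 := fun=> Q 0)) => [|i]; last first.
  by rewrite mem_iota => /andP[_ ->].
rewrite [filter _ (iota 0 (sumn h))](eq_filter (a2 := fun i => Q (block h i).+1))
  => [|i /=]; last first.
  by rewrite ltnNge leq_addr addKn.
rewrite -(IHh (fun d => Q d.+1)) -flatten_shift.
by case: (Q 0); rewrite ?filter_predT ?filter_pred0.
Qed.

Lemma flatten_rev_seg h (ds : seq nat) :
  flatten [seq rev (seg h d) | d <- rev ds] = rev (flatten [seq seg h d | d <- ds]).
Proof. by rewrite rev_flatten -map_comp map_rev. Qed.

Lemma spiral_spiral_of h : spiral h = spiral_of (fun i => odd (block h i)) (sumn h).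
Proof. by rewrite /spiral /spiral_of flatten_rev_seg !flatten_seg_filter. Qed.

Lemma spiral_mirror_spiral_of h :
  spiral_mirror h = spiral_of (fun i => ~~ odd (block h i)) (sumn h).
Proof.
rewrite /spiral_mirror /spiral_of flatten_rev_seg !flatten_seg_filter.
by congr (rev _ ++ _); apply: eq_filter => i; rewrite negbK.
Qed.

Lemma alphabet_size_block h : all (fun x => 0 < x) h -> 2 <= sumn h ->
  alphabet_size (fun i => odd (block h i)) (sumn h) = size h + (2 <= last 0 h).
Proof.
move=> h_pos S2; have h_nil : h != [::] by case: h h_pos S2.
have L1 : (sumn h).-2.+1 = (sumn h).-1 by lia.
have step := @block_step h (sumn h).-2 h_pos; rewrite L1 in step.
rewrite /alphabet_size count_turn_block // eq_odd_unit_step ?step 1?block_last_pair //; last lia.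
by rewrite addn1 prednK // lt0n size_eq0.
Qed.

Theorem lemma1 (N : nat) (h pi : seq nat) :
  2 <= N ->
  spiralling h pi ->
  2 <= nth 0 h 0 ->
  (forbidden N pi <->
     ((N <= size h /\ 2 <= last 0 h) \/ (N.+1 <= size h /\ last 0 h = 1))).
Proof.
move=> N2 [D2 [h_pos spiral_pi]] h0_long.
have S2 : 2 <= sumn h by move: h0_long; case: (h) => //= x h'; lia.
have first_pair : block h 0 = block h 1.
  by move: h0_long; case: (h) => //= x h' x2; rewrite !(leq_trans _ x2).
suff -> : forbidden N pi <-> ~ (size h + (2 <= last 0 h) <= N).
  have : 0 < last 0 h.
    by move: h_pos D2; case/lastP: (h) => // h' x; rewrite all_rcons last_rcons => /andP[].
  by case: (leqP 2 (last 0 h)) => /= last2; split; lia.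
rewrite -(alphabet_size_block h_pos S2) /forbidden.
case: spiral_pi => ->; rewrite ?spiral_spiral_of ?spiral_mirror_spiral_of.
  by rewrite allowed_spiral_ofP // first_pair.
rewrite allowed_spiral_ofP ?first_pair //.
by rewrite (alphabet_size_compl _ (f := fun i => odd (block h i))).
Qed.
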